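(* Let $s,t,r$ be nonnegative integers with $s>t$. Then \[ \sum_{D \in \mathcal{D}_{s,t}^{(r)}} q^{\mathrm{vmr}(D)} = q^{\binom{r+1}{2}}\begin{bmatrix}s+t\\ s+r\end{bmatrix}_q. \]
   Context: A ballot path from $(0,0)$ to $(s+t,s-t)$ is a sequence of lattice points $v_0=(0,0),v_1,\ldots,v_{s+t}=(s+t,s-t)$ with each step $v_i-v_{i-1}\in\{(1,1),(1,-1)\}$ that never goes below the $x$-axis. A point $v_i$ ($0<i<s+t$) is a valley if $v_i-v_{i-1}=(1,-1)$ and $v_{i+1}-v_i=(1,1)$; a valley lying on the $x$-axis is a return. Each return may independently be marked or not; a marked ballot path is a ballot path together with a choice of which of its returns are marked. $\mathcal{D}_{s,t}^{(r)}$ is the set of marked ballot paths from $(0,0)$ to $(s+t,s-t)$ with at least $r$ marked returns. For such $D$, $\mathrm{maj}(D)$ is the sum of the $x$-coordinates of all valleys of $D$, and $\mathrm{vmr}(D)=\mathrm{maj}(D)-\frac12\sum x_i$, where the last sum runs over the $x$-coordinates $x_i$ of the marked returns of $D$. Notation: $(a;q)_n=(1-a)\cdots(1-aq^{n-1})$ and $\begin{bmatrix}n\\k\end{bmatrix}_q=\frac{(q;q)_n}{(q;q)_k(q;q)_{n-k}}$ for $n\ge k\ge0$, $0$ otherwise. *)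

From mathcomp Require Import all_boot all_order all_algebra fraction.
Set Implicit Arguments. Unset Strict Implicit. Unset Printing Implicit Defensive.
Import Order.TTheory GRing.Theory Num.Theory.
Local Open Scope ring_scope.

Definition qpoch (F : fieldType) (a q : F) (n : nat) : F :=
  \prod_(i < n) (1 - a * q ^+ i).

Definition qbinom (F : fieldType) (q : F) (n k : nat) : F :=
  if (k <= n)%N then qpoch q q n / (qpoch q q k * qpoch q q (n - k)) else 0.

Definition qvar : {fraction {poly rat}} := tofrac ('X : {poly rat}).

(* A lattice path of length n is encoded by its step sequence: true = (1,1),
   false = (1,-1). Step number j (1-indexed) is nth false p (j-1).
   height p i = y-coordinate of v_i. *)
Definition height (p : seq bool) (i : nat) : int :=
  \sum_(j < i) (if nth false p j then 1 else -1).

Definition is_ballot (s t : nat) (p : seq bool) : bool :=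
  (size p == s + t)%N &&
  [forall i : 'I_(size p).+1, 0 <= height p i] &&
  (height p (size p) == s%:Z - t%:Z).

Definition is_valley (p : seq bool) (i : nat) : bool :=
  [&& (0 < i)%N, (i < size p)%N, ~~ nth false p i.-1 & nth false p i].

Definition is_return (p : seq bool) (i : nat) : bool :=
  is_valley p i && (height p i == 0).

Definition maj (p : seq bool) : nat :=
  \sum_(0 <= i < size p | is_valley p i) i.

Definition in_Dr (s t r : nat) (D : (s + t).-tuple bool * {set 'I_(s + t)}) : bool :=
  [&& is_ballot s t D.1,
      [forall i in D.2, is_return D.1 (nat_of_ord i)] &
      (r <= #|D.2|)%N].

(* Returns lie on
   the x-axis, hence have even x-coordinate, so each x_i/2 is an exact nat,
   and vmr(D) >= 0 since every marked return is a valley counted in maj. *)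
Definition vmr (s t : nat) (D : (s + t).-tuple bool * {set 'I_(s + t)}) : nat :=
  (maj D.1 - \sum_(i in D.2) (nat_of_ord i)./2)%N.

From mathcomp Require Import all_boot all_order all_algebra fraction.
From mathcomp Require Import ring zify.

Set Implicit Arguments.
Unset Strict Implicit.
Unset Printing Implicit Defensive.

Import GRing.Theory.
Local Open Scope ring_scope.

(* Read a marked path as a word of (step, mark) letters and sort words of length n
   by final height h, direction of the last step and a lower bound r on the number
   of marks.  Appending a letter acts linearly on these generating functions
   ([append_step]).  The closed forms q^C(r+1,2) [n'; (n+h)/2 + r]_q, where n' = n - 1
   if h = 0 and n' = n otherwise, split by the last step, obey the same recursion by
   q-Pascal identities and agree at n = 0; at n = s + t, h = s - t > 0 they give the
   theorem. *)

Section GaussianBinomial.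
Variables (F : fieldType) (q : F).
Hypothesis qX_neq1 : forall i, (0 < i)%N -> q ^+ i != 1.

Local Notation qfact := (qpoch q q).
Local Notation qbin := (qbinom q).

Lemma qpoch0 : qfact 0 = 1.
Proof. by rewrite /qpoch big_ord0. Qed.

Lemma qpochS k : qfact k.+1 = qfact k * (1 - q ^+ k.+1).
Proof. by rewrite /qpoch big_ord_recr /= exprS. Qed.

Lemma subr1qXS_neq0 k : 1 - q ^+ k.+1 != 0.
Proof. by rewrite subr_eq0 eq_sym qX_neq1. Qed.

Lemma qpoch_neq0 k : qfact k != 0.
Proof.
elim: k => [|k IHk]; first by rewrite qpoch0 oner_eq0.
by rewrite qpochS mulf_neq0 // subr1qXS_neq0.
Qed.

Lemma qbinom_small n k : (n < k)%N -> qbin n k = 0.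
Proof. by move=> ltnk; rewrite /qbinom leqNgt ltnk. Qed.

Lemma qbinom_addE k d : qbin (k + d) k = qfact (k + d) / (qfact k * qfact d).
Proof. by rewrite /qbinom leq_addr addKn. Qed.

Lemma qbinomnn n : qbin n n = 1.
Proof. by rewrite -{1}[n]addn0 qbinom_addE addn0 qpoch0 mulr1 divff // qpoch_neq0. Qed.

Lemma qbinomn0 n : qbin n 0 = 1.
Proof. by rewrite -{1}[n]add0n qbinom_addE add0n qpoch0 mul1r divff // qpoch_neq0. Qed.

Lemma qbinom0n k : qbin 0 k = (k == 0)%:R.
Proof. by case: k => [|k]; rewrite ?qbinomn0 // qbinom_small. Qed.

Lemma qbinom_sub n k : (k <= n)%N -> qbin n (n - k) = qbin n k.
Proof.
move/subnKC => <-; move: (n - k)%N => d.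
by rewrite addKn [RHS]qbinom_addE addnC qbinom_addE addnC [qfact d * _]mulrC.
Qed.

Lemma qbinomS n k : qbin n.+1 k.+1 = qbin n k + q ^+ k.+1 * qbin n k.+1.
Proof.
case: (ltngtP k n) => [ltkn|ltnk|->]; last first.
- by rewrite !qbinomnn qbinom_small ?mulr0 ?addr0.
- by rewrite !qbinom_small ?mulr0 ?addr0 // ltnW.
move/subnKC: ltkn => <-; move: (n - k.+1)%N => d.
rewrite (_ : qbin (k.+1 + d).+1 k.+1 = qfact (k + d).+2 / (qfact k.+1 * qfact d.+1));
  last by rewrite -addnS qbinom_addE addSn addnS.
rewrite (_ : qbin (k.+1 + d) k = qfact (k + d).+1 / (qfact k * qfact d.+1));
  last by rewrite addSnnS qbinom_addE addnS.
rewrite qbinom_addE addSn !qpochS.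
have := qpoch_neq0 k; have := qpoch_neq0 d.
have := subr1qXS_neq0 k; have := subr1qXS_neq0 d => nz_d1 nz_k1 nz_d nz_k.
rewrite (_ : q ^+ (k + d).+2 = q ^+ k.+1 * q ^+ d.+1); last first.
  by rewrite -exprD addSn addnS.
by field; rewrite nz_k nz_d nz_k1 nz_d1.
Qed.

Lemma qbinomS_rev n k : qbin n.+1 k.+1 = q ^+ (n - k) * qbin n k + qbin n k.+1.
Proof.
case: (ltngtP k n) => [ltkn|ltnk|->]; last first.
- by rewrite subnn mul1r !qbinomnn qbinom_small ?addr0.
- by rewrite !qbinom_small ?mulr0 ?addr0 // ltnW.
rewrite -(@qbinom_sub n.+1 k.+1 (ltnW ltkn)) subSS -(subnSK ltkn) qbinomS.
by rewrite (subnSK ltkn) !qbinom_sub ?(ltnW ltkn) // addrC.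
Qed.

Lemma mul_qbinom_diag n k :
  (1 - q ^+ k.+1) * qbin n.+1 k.+1 = (1 - q ^+ n.+1) * qbin n k.
Proof.
case: (leqP k n) => [lekn|ltnk]; last by rewrite !qbinom_small ?mulr0.
move/subnKC: lekn => <-; move: (n - k)%N => d.
rewrite -addSn !qbinom_addE !qpochS addSn.
have := qpoch_neq0 k; have := qpoch_neq0 d; have := subr1qXS_neq0 k.
by move=> nz_k1 nz_d nz_k; field; rewrite nz_d nz_k nz_k1.
Qed.

Lemma qbinomSS n k :
  qbin n.+2 k.+1 = qbin n.+1 k.+1 + qbin n.+1 k + (q ^+ n.+1 - 1) * qbin n k.
Proof.
rewrite qbinomS; apply/eqP; rewrite -subr_eq0; apply/eqP.
transitivity ((1 - q ^+ n.+1) * qbin n k - (1 - q ^+ k.+1) * qbin n.+1 k.+1).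
  by ring.
by rewrite mul_qbinom_diag subrr.
Qed.

Lemma qbinom_center_diff m r :
  q ^+ 'C(r.+1, 2) * (qbin m.*2.+2 (m.+1 + r) - qbin m.*2.+1 (m.+1 + r))
  = q ^+ m.+1 * (q ^+ 'C(r.-1.+1, 2) * qbin m.*2.+1 (m.+1 + r.-1)).
Proof.
case: r => [|r].
  rewrite !addn0 qbinomS_rev addrK /= expr0 !mul1r.
  have -> : (m.*2.+1 - m = m.+1)%N by lia.
  rewrite -(@qbinom_sub m.*2.+1 m.+1); last by lia.
  by rewrite (_ : (m.*2.+1 - m.+1 = m)%N) //; lia.
rewrite addnS qbinomS_rev addrK /=.
case: (leqP r m) => [lerm|ltmr]; last by rewrite qbinom_small ?mulr0 //; lia.
rewrite mulrA -exprD mulrA -exprD binS bin1.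
by congr (q ^+ _ * _); lia.
Qed.

End GaussianBinomial.

Lemma even_or_odd n : exists m, n = m.*2 \/ n = m.*2.+1.
Proof.
exists n./2; have := odd_double_half n.
by case: (odd n) => e; [right | left]; rewrite -{1}e.
Qed.

Section LastStep.
Variables (F : fieldType) (q : F).

(* [f h up r] stands for the generating function of words ending at height h, with
   last step up iff [up] and at least r marks.  An up step after a down step at
   position n creates a valley of weight q^n; on the axis it may instead be a marked
   return, of weight q^(n - n/2), which then accounts for one of the r marks. *)
Definition append_step (f : nat -> bool -> nat -> F) n h (up : bool) r : F :=
  if up then
    if h is h'.+1 then
      f h' true r + q ^+ n * f h' false r
      + (if h' == 0%N then q ^+ (n - n./2) * f 0%N false r.-1 else 0)
    else 0
  else f h.+1 true r + f h.+1 false r.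

Lemma eq_append_step f g n h l r : (forall h l r, f h l r = g h l r) ->
  append_step f n h l r = append_step g n h l r.
Proof. by move=> eq_fg; case: l; case: h => [|h]; rewrite /= ?eq_fg. Qed.

Lemma sum_append_step (I : finType) (f : I -> nat -> bool -> nat -> F) n h l r :
  \sum_i append_step (f i) n h l r
  = append_step (fun h l r => \sum_i f i h l r) n h l r.
Proof.
case: l => /=; last by rewrite big_split.
case: h => [|h]; first by rewrite big1_eq.
rewrite !big_split /= mulr_sumr.
by case: (h == 0%N); rewrite /= ?mulr_sumr ?big1_eq.
Qed.

End LastStep.

Section ClosedForm.
Variables (F : fieldType) (q : F).
Hypothesis qX_neq1 : forall i, (0 < i)%N -> q ^+ i != 1.
Local Notation qbin := (qbinom q).

Definition closed_total n h r : F :=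
  if odd (n + h) then 0
  else q ^+ 'C(r.+1, 2) * qbin (if h == 0%N then n.-1 else n) ((n + h)./2 + r).

Definition closed_down n h r : F :=
  if n is n'.+1 then closed_total n' h.+1 r else 0.

Definition closed_gf n h (up : bool) r : F :=
  if up then closed_total n h r - closed_down n h r else closed_down n h r.

Lemma closed_total_even n h r m : (n + h = m.*2)%N ->
  closed_total n h r = q ^+ 'C(r.+1, 2) * qbin (if h == 0%N then n.-1 else n) (m + r).
Proof. by move=> e; rewrite /closed_total e odd_double doubleK. Qed.

Lemma closed_total_odd n h r m : (n + h = m.*2.+1)%N -> closed_total n h r = 0.
Proof. by move=> e; rewrite /closed_total e /= odd_double. Qed.

Lemma closed_gf0 h l r : closed_gf 0 h l r = [&& h == 0%N, l & r == 0%N]%:R.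
Proof.
case: l; last by rewrite andbF.
rewrite /closed_gf /closed_down subr0 /closed_total add0n if_same /= (qbinom0n qX_neq1).
case: h => [|[|h]] /=; [|by []|by rewrite mulr0 if_same].
by case: r => [|r]; rewrite /= ?mulr1 ?mulr0 ?expr0.
Qed.

Lemma closed_up_off_axis n h r :
  closed_total n.+1 h.+2 r - closed_total n h.+3 r
  = closed_total n h.+1 r - closed_down n h.+1 r + q ^+ n * closed_down n h.+1 r.
Proof.
rewrite /closed_down; have [m [e|e]] := even_or_odd (n + h).
  rewrite (@closed_total_odd n.+1 h.+2 _ m.+1) ?(@closed_total_odd n h.+3 _ m.+1)
    ?(@closed_total_odd n h.+1 _ m); try lia.
  case: n e => [|n] e; rewrite ?(@closed_total_odd n h.+2 _ m) ?subr0 ?mulr0 ?addr0 //.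
  lia.
rewrite (@closed_total_even n.+1 h.+2 _ m.+2) ?(@closed_total_even n h.+3 _ m.+2)
  ?(@closed_total_even n h.+1 _ m.+1) /=; try lia.
case: n e => [|n] e.
  by rewrite !qbinom_small ?mulr0 ?subr0 ?addr0 //; lia.
rewrite (@closed_total_even n h.+2 _ m.+1) /=; last by lia.
by rewrite (addSn m.+1) (qbinomSS qX_neq1); ring.
Qed.

Lemma closed_up_from_axis n r :
  closed_total n.+1 1 r - closed_total n 2 r
  = closed_total n 0 r - closed_down n 0 r + q ^+ n * closed_down n 0 r
    + q ^+ (n - n./2) * closed_down n 0 r.-1.
Proof.
rewrite /closed_down; case: n => [|n].
  rewrite /closed_total /= add1n (qbinomS qX_neq1) (@qbinom_small _ _ 0 r.+1) //.
  by rewrite !mulr0 !addr0 !subr0.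
have [m [e|e]] := even_or_odd n.
  rewrite (@closed_total_odd n.+2 1 _ m.+1) ?(@closed_total_odd n.+1 2 _ m.+1)
    ?(@closed_total_odd n.+1 0 _ m) ?(@closed_total_odd n 1 _ m); try lia.
  by rewrite !mulr0 !subr0 !addr0.
rewrite (@closed_total_even n.+2 1 _ m.+2) ?(@closed_total_even n.+1 2 _ m.+2)
  ?(@closed_total_even n.+1 0 _ m.+1) ?(@closed_total_even n 1 _ m.+1) /=; try lia.
have -> : (n.+1 - n.+1./2 = m.+1)%N by rewrite e -doubleS doubleK; lia.
rewrite (addSn m.+1) (qbinomSS qX_neq1) subrr add0r e -qbinom_center_diff //.
by ring.
Qed.

Lemma closed_gfS n h l r :
  closed_gf n.+1 h l r = append_step q (closed_gf n) n h l r.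
Proof.
case: l; last by rewrite /= subrK.
case: h => [|[|h]] /=.
- by rewrite /closed_total addn0 addn1 subrr.
- by rewrite closed_up_from_axis.
- by rewrite closed_up_off_axis addr0.
Qed.

End ClosedForm.

Lemma heightS p i : height p i.+1 = height p i + (if nth false p i then 1 else -1).
Proof. by rewrite /height big_ord_recr. Qed.

Lemma height_rcons p b i : (i <= size p)%N -> height (rcons p b) i = height p i.
Proof.
move=> le_i_p; apply: eq_bigr => j _.
by rewrite nth_rcons (leq_trans (ltn_ord j) le_i_p).
Qed.

Lemma is_valley_rcons p b i :
  (i < size p)%N -> is_valley (rcons p b) i = is_valley p i.
Proof.
move=> lt_i_p; rewrite /is_valley size_rcons !nth_rcons lt_i_p.
by rewrite (leq_ltn_trans (leq_pred i) lt_i_p) ltnS (ltnW lt_i_p).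
Qed.

Lemma is_valley_rcons_size p b : is_valley (rcons p b) (size p) = ~~ last true p && b.
Proof.
case/lastP: p => [|p x] //.
rewrite /is_valley !size_rcons /= ltnSn last_rcons !nth_rcons !size_rcons ltnSn.
by rewrite ltnn eqxx /= ltnn eqxx.
Qed.

Lemma is_return_rcons p b i :
  (i < size p)%N -> is_return (rcons p b) i = is_return p i.
Proof. by move=> lt_i_p; rewrite /is_return is_valley_rcons ?height_rcons // ltnW. Qed.

Lemma is_return_rcons_size p b :
  is_return (rcons p b) (size p) = [&& ~~ last true p, b & height p (size p) == 0].
Proof. by rewrite /is_return is_valley_rcons_size height_rcons // andbA. Qed.

Lemma iota0S n : iota 0 n.+1 = rcons (iota 0 n) n.
Proof. by rewrite -addn1 iotaD cats1. Qed.

Section MarkedWords.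
Implicit Types (w : seq (bool * bool)) (x : bool * bool).

Definition steps w := map fst w.
Definition marks w := map snd w.
Definition end_height w : int := height (steps w) (size w).
(* The empty word counts as ending up: position 0 is never a valley. *)
Definition ends_up w := last true (steps w).
Definition nmarks w := count snd w.

Definition marked_ballot w :=
  all (fun i => 0 <= height (steps w) i) (iota 0 (size w).+1) &&
  all (fun i => nth false (marks w) i ==> is_return (steps w) i) (iota 0 (size w)).

Definition weight w : nat :=
  \sum_(0 <= i < size w | is_valley (steps w) i)
     (if nth false (marks w) i then i - i./2 else i).

Lemma steps_rcons w x : steps (rcons w x) = rcons (steps w) x.1.
Proof. exact: map_rcons. Qed.

Lemma size_steps w : size (steps w) = size w.
Proof. exact: size_map. Qed.

Lemma nth_marks_rcons w x i : (i < size w)%N ->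
  nth false (marks (rcons w x)) i = nth false (marks w) i.
Proof. by move=> lt_i_w; rewrite /marks map_rcons nth_rcons size_map lt_i_w. Qed.

Lemma nth_marks_rcons_size w x : nth false (marks (rcons w x)) (size w) = x.2.
Proof. by rewrite /marks map_rcons nth_rcons size_map ltnn eqxx. Qed.

Lemma end_height_rcons w x :
  end_height (rcons w x) = end_height w + (if x.1 then 1 else -1).
Proof.
rewrite /end_height steps_rcons size_rcons heightS nth_rcons size_steps ltnn eqxx.
by rewrite height_rcons // size_steps.
Qed.

Lemma ends_up_rcons w x : ends_up (rcons w x) = x.1.
Proof. by rewrite /ends_up steps_rcons last_rcons. Qed.

Lemma nmarks_rcons w x : nmarks (rcons w x) = (nmarks w + x.2)%N.
Proof. by rewrite /nmarks -cats1 count_cat /= addn0. Qed.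

Lemma marked_ballot_rcons w x :
  marked_ballot (rcons w x) =
  [&& marked_ballot w, 0 <= end_height (rcons w x)
    & x.2 ==> [&& ~~ ends_up w, x.1 & end_height w == 0]].
Proof.
rewrite [marked_ballot (rcons w x)]/marked_ballot size_rcons.
rewrite (iota0S (size w)) (iota0S (size w).+1) !all_rcons.
have -> : all (fun i => 0 <= height (steps (rcons w x)) i) (iota 0 (size w).+1)
          = all (fun i => 0 <= height (steps w) i) (iota 0 (size w).+1).
  apply: eq_in_all => i; rewrite mem_iota add0n => lt_i_w.
  by rewrite steps_rcons height_rcons // size_steps -ltnS.
have -> : all (fun i => nth false (marks (rcons w x)) i ==> is_return (steps (rcons w x)) i)
              (iota 0 (size w))
          = all (fun i => nth false (marks w) i ==> is_return (steps w) i) (iota 0 (size w)).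
  apply: eq_in_all => i; rewrite mem_iota add0n => lt_i_w.
  by rewrite nth_marks_rcons // steps_rcons is_return_rcons // size_steps.
rewrite nth_marks_rcons_size steps_rcons -(size_steps w) is_return_rcons_size size_steps.
rewrite /marked_ballot /end_height /ends_up size_rcons steps_rcons.
set A := all _ (iota 0 (size w).+1); set M := all _ (iota 0 (size w)).
by case: A; case: M; case: (0 <= _); rewrite /= ?andbT ?andbF.
Qed.

Lemma weight_rcons w x :
  weight (rcons w x) =
  (weight w + (if ~~ ends_up w && x.1 then
                 if x.2 then size w - (size w)./2 else size w
               else 0))%N.
Proof.
rewrite /weight size_rcons big_mkcond big_nat_recr //= [in RHS]big_mkcond.
congr (_ + _)%N.
  apply: eq_big_nat => i /andP [_ lt_i_w].
  by rewrite steps_rcons is_valley_rcons ?size_steps // nth_marks_rcons.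
by rewrite steps_rcons -(size_steps w) is_valley_rcons_size size_steps nth_marks_rcons_size.
Qed.

Lemma marked_ballot_end_height w : marked_ballot w -> 0 <= end_height w.
Proof. by case/andP => /allP nonneg _; apply: nonneg; rewrite mem_iota ltnSn. Qed.

Lemma marked_ballot_valley w i : marked_ballot w -> (i < size w)%N ->
  nth false (marks w) i -> is_valley (steps w) i.
Proof.
case/andP => _ /allP marks_return lt_iw marked.
have /implyP/(_ marked)/andP[] // : nth false (marks w) i ==> is_return (steps w) i.
by apply: marks_return; rewrite mem_iota lt_iw.
Qed.

End MarkedWords.

Lemma sum_tuple_rcons (V : nmodType) (T : finType) n (f : seq T -> V) :
  \sum_(t : n.+1.-tuple T) f t = \sum_(w : n.-tuple T) \sum_(x : T) f (rcons w x).
Proof.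
rewrite pair_bigA /= (reindex (fun p : n.-tuple T * T => [tuple of rcons p.1 p.2])) //=.
pose split_last (t : n.+1.-tuple T) :=
  ([tuple of belast (thead t) (behead t)], last (thead t) (behead t)).
have rcons_split_last t : rcons (split_last t).1 (split_last t).2 = t :> seq T.
  by rewrite /= -lastI; exact: (esym (congr1 val (tuple_eta t))).
exists split_last => [[w x] _|t _]; last exact/val_inj/rcons_split_last.
have /rcons_inj[ew ex] := rcons_split_last [tuple of rcons w x].
by congr (_, _) => //; apply: val_inj.
Qed.

Lemma sum_bool_pair (V : nmodType) (f : bool * bool -> V) :
  \sum_(x : bool * bool) f x
  = f (true, true) + f (true, false) + f (false, true) + f (false, false).
Proof.
rewrite (eq_bigr (fun x => f (x.1, x.2))); last by case.
by rewrite -(pair_bigA _ (fun a b => f (a, b))) !big_bool /= addrA.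
Qed.

Section GeneratingFunction.
Variables (F : fieldType) (q : F).

Definition gf_term h (up : bool) r (w : seq (bool * bool)) : F :=
  if [&& marked_ballot w, end_height w == h%:Z, ends_up w == up & (r <= nmarks w)%N]
  then q ^+ weight w else 0.

Definition gf n h up r : F := \sum_(w : n.-tuple (bool * bool)) gf_term h up r w.

Lemma sum_gf_term_rcons w h l r :
  \sum_(x : bool * bool) gf_term h l r (rcons w x)
  = append_step q (fun h l r => gf_term h l r w) (size w) h l r.
Proof.
rewrite sum_bool_pair /gf_term !marked_ballot_rcons !end_height_rcons !ends_up_rcons.
rewrite !nmarks_rcons !weight_rcons /=.
have := @marked_ballot_end_height w.
case: (marked_ballot w) => [/(_ isT) hw0|_]; case: (ends_up w) => /=;
  case: l; case: h => [|h] /=; rewrite ?andbF ?addr0 ?add0r ?addn0.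
all: repeat case: ifP => ?.
all: rewrite ?addr0 ?add0r ?mulr0 ?exprD //.
all: try ring; exfalso; lia.
Qed.

Lemma gfS n h l r : gf n.+1 h l r = append_step q (gf n) n h l r.
Proof.
rewrite /gf sum_tuple_rcons -sum_append_step; apply: eq_bigr => w _.
by rewrite sum_gf_term_rcons size_tuple.
Qed.

Lemma gf0 h l r : gf 0 h l r = [&& h == 0%N, l & r == 0%N]%:R.
Proof.
rewrite /gf (eq_bigr (fun _ => gf_term h l r [::])) => [|w _]; last by rewrite tuple0.
rewrite sumr_const card_tuple expn0 mulr1n /gf_term /end_height /height big_ord0.
rewrite /weight big_geq // expr0 (_ : marked_ballot [::]); last first.
  by rewrite /marked_ballot /= /height big_ord0.
by case: h => [|h]; case: l; case: r.
Qed.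

Lemma sum_marked_ballot n h r :
  \sum_(w : n.-tuple (bool * bool) |
         [&& marked_ballot w, end_height w == h%:Z & (r <= nmarks w)%N]) q ^+ weight w
  = gf n h true r + gf n h false r.
Proof.
rewrite /gf -big_split big_mkcond; apply: eq_bigr => w _.
by rewrite /gf_term /=; case: (ends_up w); rewrite !andbF ?andbT /= ?addr0 ?add0r.
Qed.

Hypothesis qX_neq1 : forall i, (0 < i)%N -> q ^+ i != 1.

Lemma gf_closed n h l r : gf n h l r = closed_gf q n h l r.
Proof.
elim: n => [|n IHn] in h l r *; first by rewrite gf0 (closed_gf0 qX_neq1).
by rewrite gfS (closed_gfS qX_neq1); apply: eq_append_step.
Qed.

End GeneratingFunction.

Lemma forall_ord_iota m (P : pred nat) : [forall i : 'I_m, P i] = all P (iota 0 m).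
Proof.
apply/forallP/allP => [P_ord i|P_iota i]; last by apply: P_iota; rewrite mem_iota ltn_ord.
by rewrite mem_iota add0n => /andP[_ lt_im]; apply: (P_ord (Ordinal lt_im)).
Qed.

Section WordsAsMarkedPaths.
Variables s t : nat.
Local Notation n := (s + t)%N.
Implicit Types w : n.-tuple (bool * bool).

Definition path_of_word w : n.-tuple bool * {set 'I_n} :=
  ([tuple of steps w], [set i : 'I_n | (tnth w i).2]).

Lemma path_of_word_bij : bijective path_of_word.
Proof.
exists (fun D : n.-tuple bool * {set 'I_n} => [tuple (tnth D.1 i, i \in D.2) | i < n]).
  move=> w; apply: eq_from_tnth => i.
  by rewrite tnth_mktuple tnth_map inE; case: (tnth w i).
move=> [p M]; congr (_, _).
  by apply: eq_from_tnth => i; rewrite tnth_map tnth_mktuple.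
by apply/setP => i; rewrite inE tnth_mktuple.
Qed.

Lemma tnth_mark w (i : 'I_n) : (tnth w i).2 = nth false (marks w) i.
Proof. by rewrite (tnth_nth (false, false)) (nth_map (false, false)) ?size_tuple. Qed.

Lemma card_path_of_word w : #|(path_of_word w).2| = nmarks w.
Proof.
rewrite /= -sum1_card /nmarks -sum1_count.
rewrite (eq_bigl (fun i => (tnth w i).2)) => [|i]; last by rewrite inE.
by rewrite (big_tuple _ _ w snd (fun _ => 1%N)).
Qed.

Lemma in_Dr_path_of_word r w : (t <= s)%N ->
  in_Dr r (path_of_word w)
  = [&& marked_ballot w, end_height w == (s - t)%N%:Z & (r <= nmarks w)%N].
Proof.
move=> le_ts; rewrite /in_Dr /is_ballot /= card_path_of_word size_map size_tuple eqxx.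
rewrite (forall_ord_iota _ (fun i => 0 <= height (steps w) i)).
have -> : [forall i in [set i | (tnth w i).2], is_return (steps w) i] =
          [forall i : 'I_n, nth false (marks w) i ==> is_return (steps w) i].
  by apply: eq_forallb => i; rewrite inE tnth_mark.
rewrite (forall_ord_iota _ (fun i => nth false (marks w) i ==> is_return (steps w) i)).
rewrite /marked_ballot /end_height size_tuple subzn // andTb.
set A := all _ (iota 0 n.+1); set M := all _ (iota 0 n).
by case: A; case: M; rewrite ?andbF.
Qed.

Lemma vmr_path_of_word w : marked_ballot w -> vmr (path_of_word w) = weight w.
Proof.
move=> mb; rewrite /vmr /maj /= size_tuple.
set M := (\sum_(0 <= i < n | is_valley (steps w) i)
            (if nth false (marks w) i then i./2 else 0))%N.
have -> : (\sum_(i in [set i : 'I_n | (tnth w i).2]) i./2)%N = M.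
  rewrite /M big_mkcond [RHS]big_mkcond big_mkord; apply: eq_bigr => i _.
  rewrite inE tnth_mark; case: ifP => [marked|_]; last by rewrite if_same.
  by rewrite (marked_ballot_valley mb) // size_tuple.
have -> : (\sum_(0 <= i < n | is_valley (steps w) i) i = weight w + M)%N.
  rewrite /weight /M size_tuple -big_split; apply: eq_bigr => i _.
  case: (nth false (marks w) i) => /=; rewrite ?addn0 // subnK //.
  by rewrite leq_half_double -addnn; lia.
by rewrite addnK.
Qed.

End WordsAsMarkedPaths.

Lemma qvar_neq1 i : (0 < i)%N -> qvar ^+ i != 1.
Proof.
move=> i_gt0; rewrite /qvar -rmorphXn -tofrac1 tofrac_eq.
apply/eqP => /(congr1 (fun p : {poly rat} => size p)).
by rewrite size_polyXn size_poly1 => -[i_eq0]; rewrite i_eq0 in i_gt0.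
Qed.

Theorem lemma2p1 (s t r : nat) (hst : (t < s)%N) :
  \sum_(D : (s + t).-tuple bool * {set 'I_(s + t)} | in_Dr r D) qvar ^+ vmr D
  = qvar ^+ 'C(r.+1, 2) * qbinom qvar (s + t) (s + r).
Proof.
rewrite (reindex (@path_of_word s t)); last exact/onW_bij/path_of_word_bij.
rewrite (eq_bigl _ _ (fun w => in_Dr_path_of_word r w (ltnW hst))).
rewrite (eq_bigr (fun w : (s + t).-tuple _ => qvar ^+ weight w)); last first.
  by move=> w /andP[mb _]; rewrite vmr_path_of_word.
rewrite sum_marked_ballot !(gf_closed qvar_neq1) /closed_gf subrK.
rewrite (@closed_total_even _ _ _ _ _ s); last by lia.
by rewrite subn_eq0 leqNgt hst.
Qed.
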